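(* Consider the iterative algorithm (described in the context) for the incomplete multi-view learning problem. The sequences $\{\mathcal{G}^k\}$ and $\{\mathcal{Y}^k\}$ it generates satisfy $\lim_{k\to\infty}\|\mathcal{G}^k-\mathcal{Y}^k\|_F=0$, $\lim_{k\to\infty}\|\mathcal{G}^{k+1}-\mathcal{G}^k\|_F=0$, and $\lim_{k\to\infty}\|\mathcal{Y}^{k+1}-\mathcal{Y}^k\|_F=0$.
   Context: Data: $m$ views $X_i\in\mathbb{R}^{d_i\times n}$, $i=1,\dots,m$, of $n$ samples; if the $j$-th instance of view $i$ is missing then the column $X_{i(:,j)}=0$. $P_i\in\mathbb{R}^{n\times n}$ is diagonal with $P_{i(j,j)}=1$ if the $j$-th instance of view $i$ is present and $0$ otherwise; $n_i$ is the number of present instances of view $i$. Assume $X_iP_iX_i^\top$ is invertible for each $i$. $\mathcal{M}\in\mathbb{R}^{n\times m\times n}$ is a given (incomplete) graph tensor, and $\Omega$ is the set of indices $(i,j,k)$ where $\mathcal{M}$ is observed; $P_\Omega(\mathcal{Z})$ keeps entries with indices in $\Omega$ and sets the others to $0$. For a graph tensor $\mathcal{G}\in\mathbb{R}^{n\times m\times n}$ write $G_i=\mathcal{G}_{(:,i,:)}\in\mathbb{R}^{n\times n}$. For $A\in\mathbb{R}^{d\times n}$ and $G\in\mathbb{R}^{n\times n}$, $\mathrm{tr}(AL_GA^\top)=\tfrac12\sum_{j,k}G_{(j,k)}\|A_{(:,j)}-A_{(:,k)}\|_2^2$. Parameters: $\lambda,\mu,\gamma>0$, $0<p\le1$, weights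 $w_1\ge\cdots\ge w_l\ge0$ with $l=\min(n,m)$, a semi-orthogonal $\Phi\in\mathbb{R}^{n\times r}$ ($\Phi^\top\Phi=I_r$) and $\Phi^c\in\mathbb{R}^{n\times(n-r)}$ with $\overline{\Phi}=[\Phi,\Phi^c]$ orthogonal. Tensor norm: for $\mathcal{X}\in\mathbb{R}^{n_1\times n_2\times n_3}$ with frontal slices $X^{(k)}$ and $\Psi\in\mathbb{R}^{n_3\times s}$, $\mathcal{X}_\Psi$ has frontal slices $X_\Psi^{(i)}=\sum_k\Psi_{ki}X^{(k)}$; $\|\mathcal{X}\|_{\Phi,w,S_p}^p=\sum_{i=1}^r\sum_{j=1}^l w_j\sigma_j(X_\Phi^{(i)})^p$, $\sigma_j$ the $j$-th smallest singular value. For a matrix $Y=U\Sigma V^\top$ (SVD), $S_{\tau,w,p}(Y)=U\mathrm{diag}(\gamma_j)V^\top$ with $\gamma_j$ (replacing $\sigma_j(Y)$) a global minimizer of $\min_{x\ge0}\frac12(x-\sigma_j(Y))^2+\tau w_jx^p$. With $f_i(A,W_i,G_i)=\|(A-W_i^\top X_i)P_i\|_F^2+\lambda\,\mathrm{tr}(AL_{G_i}A^\top)$, the algorithm is: initialize $k=0$, $\eta=1.1$, $\rho^0=10^{-4}$, $\delta_i^0=1/m$, $\mathcal{C}^0=0$, $\mathcal{G}^0=\mathcal{Y}^0=\mathcal{M}$. At iteration $k$: (1) $(A^{k+1},\{W_i^{k+1}\})$ minimizes $\sum_i\delta_i^k f_i(A,W_i,G_i^k)$ subject to $AA^\top=I_d$,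 with $W_i^{k+1}=(X_iP_iX_i^\top)^{-1}X_iP_i(A^{k+1})^\top$; (2) $\delta_i^{k+1}=n_i/\sqrt{f_i(A^{k+1},W_i^{k+1},G_i^k)}$; (3) $\mathcal{G}^{k+1}$ is the minimizer of $\lambda\sum_i\delta_i^{k+1}\mathrm{tr}(A^{k+1}L_{G_i}(A^{k+1})^\top)+\frac\gamma2\|P_\Omega(\mathcal{G})-P_\Omega(\mathcal{M})\|_F^2+\frac{\rho^k}2\|\mathcal{G}-\mathcal{Y}^k+\mathcal{C}^k/\rho^k\|_F^2$ subject to $G_i\ge0$ entrywise and $G_i\mathbf{1}=\mathbf{1}$ for all $i$; (4) with $\mathcal{B}^k=\mathcal{G}^{k+1}+\mathcal{C}^k/\rho^k$, $\mathcal{Y}^{k+1}=(\mathcal{Z})_{\overline{\Phi}^\top}$ where $\mathcal{Z}$ has frontal slices $S_{\mu/\rho^k,w,p}(B_\Phi^{k\,(i)})$ for $i\le r$ and $B_{\Phi^c}^{k\,(j)}$ for the remaining $n-r$ slices (a minimizer of $\frac{\mu}{\rho^k}\|\mathcal{Y}\|_{\Phi,w,S_p}^p+\frac12\|\mathcal{B}^k-\mathcal{Y}\|_F^2$); (5) $\mathcal{C}^{k+1}=\mathcal{C}^k+\rho^k(\mathcal{G}^{k+1}-\mathcal{Y}^{k+1})$; (6) $\rho^{k+1}=\eta\rho^k$. *)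

From HB Require Import structures.
From mathcomp Require Import all_boot all_order all_algebra.
From mathcomp Require Import all_classical all_reals all_analysis.

Set Implicit Arguments.
Unset Strict Implicit.
Unset Printing Implicit Defensive.

Import Order.TTheory GRing.Theory Num.Theory.
Local Open Scope ring_scope.

Section IMVL.
Variable R : realType.

Definition tensor (n1 n2 n3 : nat) := 'I_n1 -> 'I_n2 -> 'I_n3 -> R.

Definition tzero n1 n2 n3 : tensor n1 n2 n3 := fun _ _ _ => 0.
Definition tadd n1 n2 n3 (S T : tensor n1 n2 n3) : tensor n1 n2 n3 :=
  fun a b c => S a b c + T a b c.
Definition tsub n1 n2 n3 (S T : tensor n1 n2 n3) : tensor n1 n2 n3 :=
  fun a b c => S a b c - T a b c.
Definition tscale n1 n2 n3 (x : R) (T : tensor n1 n2 n3) : tensor n1 n2 n3 :=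
  fun a b c => x * T a b c.

Definition tnormF2 n1 n2 n3 (T : tensor n1 n2 n3) : R :=
  \sum_(a < n1) \sum_(b < n2) \sum_(c < n3) T a b c ^+ 2.
Definition tnormF n1 n2 n3 (T : tensor n1 n2 n3) : R := Num.sqrt (tnormF2 T).

Definition POm n1 n2 n3 (Om : 'I_n1 -> 'I_n2 -> 'I_n3 -> bool)
  (T : tensor n1 n2 n3) : tensor n1 n2 n3 :=
  fun a b c => if Om a b c then T a b c else 0.

Definition fslice n1 n2 n3 (T : tensor n1 n2 n3) (k : 'I_n3) : 'M[R]_(n1, n2) :=
  \matrix_(a, b) T a b k.
Definition lslice n1 n2 n3 (T : tensor n1 n2 n3) (i : 'I_n2) : 'M[R]_(n1, n3) :=
  \matrix_(a, c) T a i c.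

Definition tmode3 n1 n2 n3 s (T : tensor n1 n2 n3) (Psi : 'M[R]_(n3, s))
  : tensor n1 n2 s :=
  fun a b i => \sum_(k < n3) Psi k i * T a b k.

Definition mfro2 p q (A : 'M[R]_(p, q)) : R := \sum_i \sum_j A i j ^+ 2.

(* tr(A L_G A^T) = 1/2 sum_{j,k} G_{jk} ||A_{:,j} - A_{:,k}||^2 *)
Definition lapTr d n (A : 'M[R]_(d, n)) (G : 'M[R]_n) : R :=
  2^-1 * \sum_(j < n) \sum_(k < n) G j k * \sum_(a < d) (A a j - A a k) ^+ 2.

Definition Pmat n (pres : 'I_n -> bool) : 'M[R]_n :=
  \matrix_(a, b) (if (a == b) && pres a then 1 else 0).

Definition fobj d n di (lam : R) (X : 'M[R]_(di, n)) (P : 'M[R]_n)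
  (A : 'M[R]_(d, n)) (W : 'M[R]_(di, d)) (G : 'M[R]_n) : R :=
  mfro2 ((A - W^T *m X) *m P) + lam * lapTr A G.

(* rectangular n x m "diagonal" matrix with diagonal entries s_0..s_{l-1} *)
Definition rdiag (n m : nat) l (s : 'I_l -> R) : 'M[R]_(n, m) :=
  \matrix_(a, b) \sum_(j < l | (nat_of_ord a == j) && (nat_of_ord b == j)) s j.
Arguments rdiag n m [l] s.

(* Z = S_{tau,w,p}(Y): Y = U diag(sigma) V^T is an SVD (singular values listed
   in increasing order, sigma_j the j-th smallest), and each gamma_j is a global
   minimizer of  x >= 0 |-> 1/2 (x - sigma_j)^2 + tau w_j x^p. *)
Definition Sthresh n m (tau : R) (w : 'I_(minn n m) -> R) (p : R)
  (Y Z : 'M[R]_(n, m)) : Prop :=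
  exists (U : 'M[R]_n) (V : 'M[R]_m) (sig gam : 'I_(minn n m) -> R),
    U^T *m U = 1%:M /\ V^T *m V = 1%:M /\
    (forall j, 0 <= sig j) /\
    (forall j1 j2 : 'I_(minn n m), (j1 <= j2)%N -> sig j1 <= sig j2) /\
    Y = U *m rdiag n m sig *m V^T /\
    (forall j, 0 <= gam j /\
       forall x, 0 <= x ->
         2^-1 * (gam j - sig j) ^+ 2 + tau * w j * powR (gam j) p
         <= 2^-1 * (x - sig j) ^+ 2 + tau * w j * powR x p) /\
    Z = U *m rdiag n m gam *m V^T.

Definition Zten n m r (Zs : 'I_r -> 'M[R]_(n, m)) (Bc : tensor n m (n - r))
  : tensor n m (r + (n - r)) :=
  fun a b i => match fintype.split i with
               | inl i1 => Zs i1 a b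
               | inr i2 => Bc a b i2
               end.

Definition rho (k : nat) : R := (10000%:R)^-1 * (11%:R / 10%:R) ^+ k.

Definition Gfeas n m (G : tensor n m n) : Prop :=
  (forall j i k, 0 <= G j i k) /\
  (forall j i, \sum_(k < n) G j i k = 1).

Definition Gobj n m d (lam gam rh : R) (Om : 'I_n -> 'I_m -> 'I_n -> bool)
  (M : tensor n m n) (A : 'M[R]_(d, n)) (delta : 'I_m -> R)
  (Y C G : tensor n m n) : R :=
  lam * (\sum_(i < m) delta i * lapTr A (lslice G i))
  + gam / 2 * tnormF2 (tsub (POm Om G) (POm Om M))
  + rh / 2 * tnormF2 (tadd (tsub G Y) (tscale rh^-1 C)).

Definition alg_run n m d r (di : 'I_m -> nat) (X : forall i, 'M[R]_(di i, n))
  (pres : 'I_m -> 'I_n -> bool) (M : tensor n m n)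
  (Om : 'I_n -> 'I_m -> 'I_n -> bool) (lam mu gam p : R)
  (w : 'I_(minn n m) -> R) (Phi : 'M[R]_(n, r)) (Phic : 'M[R]_(n, n - r))
  (A : nat -> 'M[R]_(d, n)) (W : nat -> forall i, 'M[R]_(di i, d))
  (delta : nat -> 'I_m -> R) (G Y C : nat -> tensor n m n) : Prop :=
  (forall i, delta 0%N i = (m%:R)^-1) /\ C 0%N = @tzero n m n /\
  G 0%N = M /\ Y 0%N = M /\
  forall k : nat,
  (A k.+1 *m (A k.+1)^T = 1%:M /\
   (forall i, W k.+1 i = invmx (X i *m Pmat (pres i) *m (X i)^T)
                          *m X i *m Pmat (pres i) *m (A k.+1)^T) /\
   (forall (A' : 'M[R]_(d, n)) (W' : forall i, 'M[R]_(di i, d)),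
      A' *m A'^T = 1%:M ->
      \sum_(i < m) delta k i *
          fobj lam (X i) (Pmat (pres i)) (A k.+1) (W k.+1 i) (lslice (G k) i)
      <= \sum_(i < m) delta k i *
          fobj lam (X i) (Pmat (pres i)) A' (W' i) (lslice (G k) i))) /\
  (forall i, delta k.+1 i =
     (#|[pred j | pres i j]|)%:R /
       Num.sqrt (fobj lam (X i) (Pmat (pres i)) (A k.+1) (W k.+1 i)
                      (lslice (G k) i))) /\
  (Gfeas (G k.+1) /\
   forall G', Gfeas G' ->
     Gobj lam gam (rho k) Om M (A k.+1) (delta k.+1) (Y k) (C k) (G k.+1)
     <= Gobj lam gam (rho k) Om M (A k.+1) (delta k.+1) (Y k) (C k) G') /\
  (let B := tadd (G k.+1) (tscale (rho k)^-1 (C k)) in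
   exists Zs : 'I_r -> 'M[R]_(n, m),
     (forall i, Sthresh (mu / rho k) w p (fslice (tmode3 B Phi) i) (Zs i)) /\
     Y k.+1 = tmode3 (Zten Zs (tmode3 B Phic)) (row_mx Phi Phic)^T) /\
  C k.+1 = tadd (C k) (tscale (rho k) (tsub (G k.+1) (Y k.+1))).

End IMVL.

Arguments Pmat {R n} pres.
Arguments rho {R} k.

From HB Require Import structures.
From mathcomp Require Import all_boot all_order all_algebra.
From mathcomp Require Import all_classical all_reals all_analysis.
From mathcomp Require Import ring lra.
Import Order.TTheory GRing.Theory Num.Theory.
Local Open Scope classical_set_scope.
Local Open Scope ring_scope.
Import numFieldNormedType.Exports.

(** Let B^k = G^{k+1} + C^k/rho^k be the tensor thresholded in step (4), with
  tau_k = mu/rho^k.  Moving a singular value sigma to a minimiser of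
  1/2 (x - sigma)^2 + tau w x^p costs at most 2 tau w (1 + sigma^2), so
  E_k := ||B^k - Y^{k+1}||^2 <= c tau_k (1 + ||B^k||^2).  Feasible graphs are
  bounded and step (5) reads C^{k+1}/rho^{k+1} = (B^k - Y^{k+1})/1.1, hence
  E_{k+1} <= a_{k+1} (K + E_k) with a_k = O(1/rho^k) -> 0, which forces
  E_k -> 0; then C^k/rho^k -> 0 and G^k - Y^k -> 0.
  For the successive differences, compare the objective of step (3) at its
  minimiser G^{k+2} with its value at the feasible point G^{k+1}: all terms but
  the proximal one stay bounded (A^k has orthonormal rows, graphs have entries
  in [0,1], and delta_i = n_i / sqrt f_i with f_i >= lam tr gives
  lam delta_i tr <= n_i (1 + lam tr)), so the proximal distances of G^{k+2}
  and G^{k+1} to Y^{k+1} - C^{k+1}/rho^{k+1} differ by O(1/rho^{k+1}).  This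
  gives G^{k+1} - G^k -> 0, and Y^{k+1} - Y^k -> 0 follows together with
  G^k - Y^k -> 0. *)

Set Implicit Arguments.
Unset Strict Implicit.
Unset Printing Implicit Defensive.

Section VanishingSequences.
Variable R : realType.
Implicit Types u v a E : nat -> R.

Lemma cvg0_sqrt u : u @ \oo --> 0 -> (fun k => Num.sqrt (u k)) @ \oo --> 0.
Proof. by move=> u0; rewrite -sqrtr0; apply: cvg_comp u0 _; exact: sqrt_continuous. Qed.

Lemma cvg0_le u v : (forall k, 0 <= u k <= v k) -> v @ \oo --> 0 -> u @ \oo --> 0.
Proof. by move=> uv v0; apply: (squeeze_cvgr _ (cvg_cst 0) v0); exact: nearW. Qed.

Lemma cvg0_lin u v (x y : R) : u @ \oo --> 0 -> v @ \oo --> 0 ->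
  (fun k => x * u k + y * v k) @ \oo --> 0.
Proof.
move=> u0 v0; have := cvgD (cvgMl_tmp (a := x) u0) (cvgMl_tmp (a := y) v0).
by rewrite !mulr0 addr0; apply.
Qed.

Lemma cvg0_le_lin u v1 v2 (x y : R) : (forall k, 0 <= u k <= x * v1 k + y * v2 k) ->
  v1 @ \oo --> 0 -> v2 @ \oo --> 0 -> u @ \oo --> 0.
Proof. by move=> uv v10 v20; apply: cvg0_le uv (cvg0_lin _ _ v10 v20). Qed.

Lemma cvg0_recursive_bound E a (K : R) : 0 <= K ->
  (forall k, 0 <= E k) -> (forall k, 0 <= a k) -> a @ \oo --> 0 ->
  (forall k, E k.+1 <= a k.+1 * (K + E k)) -> E @ \oo --> 0.
Proof.
move=> K0 E0 a0 a_cvg0 E_rec.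
have [N _ aN] : \forall k \near \oo, `|a k| < 2^-1 by move/cvgr0Pnorm_lt: a_cvg0; apply.
have a_half k : a (k + N) <= 2^-1.
  by have := aN (k + N) (leq_addl _ _); rewrite /= ger0_norm // => /ltW.
have E_bounded k : E (k + N) <= K + E N.
  elim: k => [|k IHk]; first by rewrite lerDr.
  apply: le_trans (E_rec _) _; rewrite -addSn.
  have := ler_wpM2r (addr_ge0 K0 (E0 (k + N))) (a_half k.+1).
  have := E0 N; lra.
rewrite -(cvg_shiftS E) -(cvg_shiftn N).
apply: (@cvg0_le _ (fun k => a (k + N).+1 * (K + (K + E N)))).
  move=> k; rewrite E0 /= -addSn; apply: le_trans (E_rec _) _.
  by rewrite ler_wpM2l // lerD2l E_bounded.
move: a_cvg0; rewrite -(cvg_shiftS a) -(cvg_shiftn N (fun k => a k.+1)).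
by move/(cvgMr_tmp (b := K + (K + E N))); rewrite mul0r; apply.
Qed.

End VanishingSequences.

Section ScalarInequalities.
Variable R : realType.

Lemma sqrrD_le (x y : R) : (x + y) ^+ 2 <= 2 * x ^+ 2 + 2 * y ^+ 2.
Proof. by rewrite -subr_ge0 (_ : _ - _ = (x - y) ^+ 2) ?sqr_ge0 //; ring. Qed.

Lemma powR_le_1Dsqr (x p : R) : 0 <= x -> 0 < p -> p <= 1 -> powR x p <= 1 + x ^+ 2.
Proof.
move=> x0 p0 p1; have [x_ge1|x_lt1] := leP 1 x.
  by apply: le_trans (ler1_powR x_ge1 p1) _; nra.
apply: le_trans (_ : 1 <= _); last by rewrite lerDl sqr_ge0.
have [->|x_neq0] := eqVneq x 0; first by rewrite powR0 ?gt_eqF.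
have x_gt0 : 0 < x by rewrite lt_def x_neq0.
by rewrite -(powRr0 x) ger_powR ?x_gt0 ?ltW.
Qed.

Lemma powR_prox_sqr_dist_le (t p s g : R) : 0 <= t -> 0 <= s -> 0 < p -> p <= 1 ->
  (forall x, 0 <= x ->
     2^-1 * (g - s) ^+ 2 + t * powR g p <= 2^-1 * (x - s) ^+ 2 + t * powR x p) ->
  (g - s) ^+ 2 <= 2 * t * (1 + s ^+ 2).
Proof.
move=> t0 s0 p0 p1 /(_ s s0); rewrite subrr expr0n mulr0 add0r.
have := mulr_ge0 t0 (powR_ge0 g p).
have := ler_wpM2l t0 (powR_le_1Dsqr s0 p0 p1).
lra.
Qed.

Lemma divr_sqrtD_le (y z : R) : 0 <= y -> 0 <= z -> z / Num.sqrt (y + z) <= 1 + z.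
Proof.
move=> y0 z0; have yz0 := addr_ge0 y0 z0.
have [s0|s_gt0] := eqVneq (Num.sqrt (y + z)) 0.
  by rewrite s0 invr0 mulr0 addr_ge0.
rewrite ler_pdivrMr ?lt_def ?s_gt0 ?sqrtr_ge0 //.
have := sqr_sqrtr yz0; have := sqrtr_ge0 (y + z).
set s := Num.sqrt (y + z) => s_ge0 ss.
rewrite mulrDl mul1r; have [s_le1|s_gt1] := leP s 1.
  have : s ^+ 2 <= s by rewrite expr2 ler_piMr.
  by have := mulr_ge0 z0 s_ge0; lra.
by have := ler_wpM2l z0 (ltW s_gt1); rewrite mulr1 [z * s]mulrC; lra.
Qed.

End ScalarInequalities.

Section FrobeniusMatrix.
Variable R : realType.

Lemma mfro2_ge0 p q (A : 'M[R]_(p, q)) : 0 <= mfro2 A.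
Proof. by apply: sumr_ge0 => i _; apply: sumr_ge0 => j _; apply: sqr_ge0. Qed.

Lemma mfro2_trace p q (A : 'M[R]_(p, q)) : mfro2 A = \tr (A *m A^T).
Proof.
rewrite /mfro2 /mxtrace; apply: eq_bigr => i _; rewrite mxE.
by apply: eq_bigr => j _; rewrite !mxE expr2.
Qed.

Lemma mfro2_orthogonal_mul p q (U : 'M[R]_p) (V : 'M[R]_q) (D : 'M[R]_(p, q)) :
  U^T *m U = 1%:M -> V^T *m V = 1%:M -> mfro2 (U *m D *m V^T) = mfro2 D.
Proof.
move=> UU VV; rewrite !mfro2_trace !trmx_mul trmxK -!mulmxA.
by rewrite (mulmxA V^T V) VV mul1mx mxtrace_mulC -!mulmxA UU mulmx1.
Qed.

Lemma rdiagB n m (s1 s2 : 'I_(minn n m) -> R) :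
  rdiag n m s1 - rdiag n m s2 = rdiag n m (fun j => s1 j - s2 j).
Proof. by apply/matrixP => a b; rewrite !mxE sumrB. Qed.

Lemma sqr_sum_subsingleton l (P : pred 'I_l) (F : 'I_l -> R) :
  (forall j j', P j -> P j' -> j = j') ->
  (\sum_(j | P j) F j) ^+ 2 = \sum_(j | P j) F j ^+ 2.
Proof.
move=> P_sub; have [j0 Pj0|P0] := pickP P; last by rewrite !big_pred0 // expr0n.
have others0 (H : 'I_l -> R) : \sum_(j | P j && (j != j0)) H j = 0.
  by apply: big1 => j /andP[Pj /eqP]; rewrite (P_sub _ _ Pj Pj0).
by rewrite (bigD1 j0) // [RHS](bigD1 j0) //= !others0 !addr0.
Qed.

Lemma mfro2_rdiag n m (s : 'I_(minn n m) -> R) :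
  mfro2 (rdiag n m s) = \sum_j s j ^+ 2.
Proof.
have rdiag_sqr a b : rdiag n m s a b ^+ 2 =
    \sum_(j < minn n m) (if (nat_of_ord a == j) && (nat_of_ord b == j) then s j ^+ 2 else 0).
  rewrite mxE sqr_sum_subsingleton ?big_mkcond // => j j'.
  by move=> /andP[/eqP aj _] /andP[/eqP aj' _]; apply: val_inj; rewrite /= -aj -aj'.
rewrite /mfro2; under eq_bigr => a _ do under eq_bigr => b _ do rewrite rdiag_sqr.
under eq_bigr => a _ do rewrite exchange_big /=.
rewrite exchange_big /=; apply: eq_bigr => j _.
rewrite (eq_bigr (fun a : 'I_n => if nat_of_ord a == j then s j ^+ 2 else 0)).
  by rewrite -big_mkcond (big_pred1 (widen_ord (geq_minl n m) j)) // => a; rewrite /= -val_eqE.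
move=> a _; case: eqP => _ /=; last by rewrite big1.
by rewrite -big_mkcond (big_pred1 (widen_ord (geq_minr n m) j)) // => b; rewrite /= -val_eqE.
Qed.

Lemma Sthresh_dist_le n m (tau p : R) (w : 'I_(minn n m) -> R) (Y Z : 'M[R]_(n, m)) :
  0 <= tau -> (forall j, 0 <= w j) -> 0 < p -> p <= 1 -> Sthresh tau w p Y Z ->
  mfro2 (Y - Z) <= 2 * tau * (\sum_j w j) * ((minn n m)%:R + mfro2 Y).
Proof.
move=> tau0 w0 p0 p1 [U [V [sig [gam [UU [VV [sig0 [_ [-> [gam_min ->]]]]]]]]]].
rewrite -mulmxBl -mulmxBr !mfro2_orthogonal_mul // rdiagB !mfro2_rdiag.
have -> : (minn n m)%:R + \sum_j sig j ^+ 2 = \sum_(j < minn n m) (1 + sig j ^+ 2).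
  by rewrite big_split /= sumr_const card_ord.
rewrite mulr_sumr; apply: ler_sum => j _.
have [gam0 gam_prox] := gam_min j.
rewrite -sqrrN opprB; apply: le_trans (powR_prox_sqr_dist_le _ (sig0 j) p0 p1 gam_prox) _.
  by rewrite mulr_ge0.
rewrite -!mulrA ler_wpM2l // ler_wpM2l // ler_wpM2r ?addr_ge0 ?sqr_ge0 //.
by rewrite (bigD1 j) //= lerDl sumr_ge0.
Qed.

End FrobeniusMatrix.

Section FrobeniusTensor.
Variable R : realType.

Lemma tnormF2_ge0 n1 n2 n3 (T : tensor R n1 n2 n3) : 0 <= tnormF2 T.
Proof. by do 3![apply: sumr_ge0 => ? _]; apply: sqr_ge0. Qed.

Lemma eq_tnormF2 n1 n2 n3 (S T : tensor R n1 n2 n3) :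
  (forall a b c, S a b c = T a b c) -> tnormF2 S = tnormF2 T.
Proof. by move=> ST; do 3![apply: eq_bigr => ? _]; rewrite ST. Qed.

Lemma ler_tnormF2 n1 n2 n3 (S T : tensor R n1 n2 n3) :
  (forall a b c, S a b c ^+ 2 <= T a b c ^+ 2) -> tnormF2 S <= tnormF2 T.
Proof. by move=> ST; do 3![apply: ler_sum => ? _]; exact: ST. Qed.

Lemma ler_tnormF2_2 n1 n2 n3 (S T U : tensor R n1 n2 n3) :
  (forall a b c, S a b c ^+ 2 <= 2 * T a b c ^+ 2 + 2 * U a b c ^+ 2) ->
  tnormF2 S <= 2 * tnormF2 T + 2 * tnormF2 U.
Proof.
by move=> STU; rewrite /tnormF2; do 3![rewrite !mulr_sumr -big_split; apply: ler_sum => ? _].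
Qed.

Lemma tnormF2_tadd_le n1 n2 n3 (S T : tensor R n1 n2 n3) :
  tnormF2 (tadd S T) <= 2 * tnormF2 S + 2 * tnormF2 T.
Proof. by apply: ler_tnormF2_2 => a b c; exact: sqrrD_le. Qed.

Lemma tnormF2_tsub_le n1 n2 n3 (S T : tensor R n1 n2 n3) :
  tnormF2 (tsub S T) <= 2 * tnormF2 S + 2 * tnormF2 T.
Proof. by apply: ler_tnormF2_2 => a b c; rewrite -(sqrrN (T a b c)); exact: sqrrD_le. Qed.

Lemma tnormF2_POm_le n1 n2 n3 Om (T : tensor R n1 n2 n3) : tnormF2 (POm Om T) <= tnormF2 T.
Proof. by apply: ler_tnormF2 => a b c; rewrite /POm; case: ifP; rewrite ?expr0n ?sqr_ge0. Qed.

Lemma tnormF2_fslices n1 n2 n3 (T : tensor R n1 n2 n3) :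
  tnormF2 T = \sum_c mfro2 (fslice T c).
Proof.
rewrite /tnormF2 /mfro2 [RHS]exchange_big /=; apply: eq_bigr => a _.
rewrite [RHS]exchange_big /=; apply: eq_bigr => b _; apply: eq_bigr => c _.
by rewrite mxE.
Qed.

Definition tfiber n1 n2 n3 (T : tensor R n1 n2 n3) a b : 'rV[R]_n3 := \row_k T a b k.

Lemma tfiber_tmode3 n1 n2 n3 s (T : tensor R n1 n2 n3) (Psi : 'M[R]_(n3, s)) a b :
  tfiber (tmode3 T Psi) a b = tfiber T a b *m Psi.
Proof.
apply/matrixP => x i; rewrite (ord1 x) !mxE.
by apply: eq_bigr => k _; rewrite mxE mulrC.
Qed.

Lemma tmode3E n1 n2 n3 s (T : tensor R n1 n2 n3) (Psi : 'M[R]_(n3, s)) a b i :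
  tmode3 T Psi a b i = (tfiber T a b *m Psi) 0 i.
Proof. by rewrite -tfiber_tmode3 mxE. Qed.

Lemma tnormF2_tfiber n1 n2 n3 (T : tensor R n1 n2 n3) :
  tnormF2 T = \sum_a \sum_b (tfiber T a b *m (tfiber T a b)^T) 0 0.
Proof.
do 2![apply: eq_bigr => ? _]; rewrite mxE.
by apply: eq_bigr => c _; rewrite !mxE expr2.
Qed.

Lemma tnormF2_tmode3 n1 n2 n3 s (T : tensor R n1 n2 n3) (Psi : 'M[R]_(n3, s)) :
  Psi *m Psi^T = 1%:M -> tnormF2 (tmode3 T Psi) = tnormF2 T.
Proof.
move=> PsiPsi; rewrite !tnormF2_tfiber; do 2![apply: eq_bigr => ? _].
by rewrite tfiber_tmode3 trmx_mul mulmxA -(mulmxA _ Psi) PsiPsi mulmx1.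
Qed.

Lemma tmode3K n1 n2 n3 s (T : tensor R n1 n2 n3) (Psi : 'M[R]_(n3, s)) a b c :
  Psi *m Psi^T = 1%:M -> tmode3 (tmode3 T Psi) Psi^T a b c = T a b c.
Proof. by move=> PsiPsi; rewrite tmode3E tfiber_tmode3 -mulmxA PsiPsi mulmx1 mxE. Qed.

Lemma tmode3_tsub n1 n2 n3 s (S T : tensor R n1 n2 n3) (Psi : 'M[R]_(n3, s)) a b i :
  tmode3 (tsub S T) Psi a b i = tsub (tmode3 S Psi) (tmode3 T Psi) a b i.
Proof. by rewrite /tmode3 /tsub -sumrB; apply: eq_bigr => k _; rewrite mulrBr. Qed.

Lemma tnormF2_tsub_tmode3 n1 n2 n3 s (S : tensor R n1 n2 n3) (T : tensor R n1 n2 s)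
  (Psi : 'M[R]_(n3, s)) :
  Psi^T *m Psi = 1%:M -> Psi *m Psi^T = 1%:M ->
  tnormF2 (tsub S (tmode3 T Psi^T)) = tnormF2 (tsub (tmode3 S Psi) T).
Proof.
move=> PsiTPsi PsiPsiT.
rewrite -(@tnormF2_tmode3 _ _ _ _ (tsub (tmode3 S Psi) T) Psi^T) ?trmxK //.
by apply: eq_tnormF2 => a b c; rewrite tmode3_tsub /tsub tmode3K.
Qed.

End FrobeniusTensor.

Section Thresholding.
Variables (R : realType) (n m r : nat).
Variables (Phi : 'M[R]_(n, r)) (Phic : 'M[R]_(n, n - r)).

Lemma tmode3_row_mxl (B : tensor R n m n) a b i :
  tmode3 B (row_mx Phi Phic) a b (lshift (n - r) i) = tmode3 B Phi a b i.
Proof. by apply: eq_bigr => k _; rewrite row_mxEl. Qed.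

Lemma tmode3_row_mxr (B : tensor R n m n) a b i :
  tmode3 B (row_mx Phi Phic) a b (rshift r i) = tmode3 B Phic a b i.
Proof. by apply: eq_bigr => k _; rewrite row_mxEr. Qed.

Lemma tnormF2_Zten_dist (B : tensor R n m n) (Zs : 'I_r -> 'M[R]_(n, m)) :
  tnormF2 (tsub (tmode3 B (row_mx Phi Phic)) (Zten Zs (tmode3 B Phic)))
  = \sum_(i < r) mfro2 (fslice (tmode3 B Phi) i - Zs i).
Proof.
rewrite tnormF2_fslices big_split_ord /= [X in _ + X]big1 ?addr0 => [|i _].
  apply: eq_bigr => i _; congr mfro2; apply/matrixP => a b.
  by rewrite !mxE /tsub /Zten (unsplitK (inl i) : fintype.split _ = _) tmode3_row_mxl.
do 2![apply: big1 => ? _]; rewrite !mxE /tsub /Zten.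
by rewrite (unsplitK (inr i) : fintype.split _ = _) tmode3_row_mxr subrr expr0n.
Qed.

Hypotheses (PhiT_Phi : (row_mx Phi Phic)^T *m row_mx Phi Phic = 1%:M)
  (Phi_PhiT : row_mx Phi Phic *m (row_mx Phi Phic)^T = 1%:M).

Lemma sum_mfro2_fslice_le (B : tensor R n m n) :
  \sum_(i < r) mfro2 (fslice (tmode3 B Phi) i) <= tnormF2 B.
Proof.
rewrite -(tnormF2_tmode3 B Phi_PhiT) tnormF2_fslices big_split_ord /=.
under [X in _ <= X + _]eq_bigr => i _.
  rewrite (_ : fslice _ _ = fslice (tmode3 B Phi) i); last first.
    by apply/matrixP => a b; rewrite !mxE tmode3_row_mxl.
  over.
by rewrite lerDl sumr_ge0 // => i _; exact: mfro2_ge0.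
Qed.

Lemma tnormF2_Ystep_le (B : tensor R n m n) (Zs : 'I_r -> 'M[R]_(n, m))
  (tau p : R) (w : 'I_(minn n m) -> R) :
  0 <= tau -> (forall j, 0 <= w j) -> 0 < p -> p <= 1 ->
  (forall i, Sthresh tau w p (fslice (tmode3 B Phi) i) (Zs i)) ->
  tnormF2 (tsub B (tmode3 (Zten Zs (tmode3 B Phic)) (row_mx Phi Phic)^T))
  <= 2 * tau * (\sum_j w j) * (r%:R * (minn n m)%:R + tnormF2 B).
Proof.
move=> tau0 w0 p0 p1 Zs_thresh.
rewrite tnormF2_tsub_tmode3 // tnormF2_Zten_dist.
apply: le_trans (_ : \sum_(i < r) 2 * tau * (\sum_j w j) *
   ((minn n m)%:R + mfro2 (fslice (tmode3 B Phi) i)) <= _).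
  by apply: ler_sum => i _; exact: (Sthresh_dist_le tau0 w0 p0 p1 (Zs_thresh i)).
rewrite -mulr_sumr ler_wpM2l ?mulr_ge0 ?sumr_ge0 //.
rewrite big_split /= sumr_const card_ord -[_ *+ r]mulr_natl lerD2l.
exact: sum_mfro2_fslice_le.
Qed.

End Thresholding.

Section FeasibleGraphs.
Variable R : realType.

Lemma Gfeas_le1 n m (G : tensor R n m n) j i k : Gfeas G -> G j i k <= 1.
Proof. by move=> [G0 G1]; rewrite -(G1 j i) (bigD1 k) //= lerDl sumr_ge0. Qed.

Lemma Gfeas_tnormF2_le n m (G : tensor R n m n) : Gfeas G -> tnormF2 G <= (n * m)%:R.
Proof.
move=> feasG; have [G0 G1] := feasG.
apply: (@le_trans _ _ (\sum_(j < n) \sum_(i < m) \sum_(k < n) G j i k)).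
  by do 3![apply: ler_sum => ? _]; rewrite expr2 ler_piMr ?Gfeas_le1.
under eq_bigr => j _ do under eq_bigr => i _ do rewrite G1.
by rewrite !sumr_const !card_ord -mulrnA mulnC.
Qed.

Lemma lapTr_ge0 d n (A : 'M[R]_(d, n)) (Gm : 'M[R]_n) :
  (forall j k, 0 <= Gm j k) -> 0 <= lapTr A Gm.
Proof.
move=> Gm0; rewrite /lapTr mulr_ge0 ?invr_ge0 //.
by do 2![apply: sumr_ge0 => ? _]; rewrite mulr_ge0 ?sumr_ge0 // => a _; rewrite sqr_ge0.
Qed.

Lemma orthonormal_rows_sqr_le1 d n (A : 'M[R]_(d, n)) a j :
  A *m A^T = 1%:M -> A a j ^+ 2 <= 1.
Proof.
move=> AAT; have : (A *m A^T) a a = 1 by rewrite AAT mxE eqxx.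
rewrite mxE => <-; rewrite (bigD1 j) //= mxE -expr2 lerDl.
by apply: sumr_ge0 => k _; rewrite mxE -expr2 sqr_ge0.
Qed.

Lemma lapTr_le d n (A : 'M[R]_(d, n)) (Gm : 'M[R]_n) :
  A *m A^T = 1%:M -> (forall j k, 0 <= Gm j k <= 1) ->
  lapTr A Gm <= (4 * d * n ^ 2)%:R.
Proof.
move=> AAT Gm01.
have dist_le j k : \sum_(a < d) (A a j - A a k) ^+ 2 <= (4 * d)%:R.
  apply: le_trans (_ : \sum_(a < d) 4%:R <= _); last first.
    by rewrite sumr_const card_ord natrM mulr_natr.
  apply: ler_sum => a _; apply: le_trans (sqrrD_le _ _) _; rewrite sqrrN.
  by have := orthonormal_rows_sqr_le1 a j AAT; have := orthonormal_rows_sqr_le1 a k AAT; lra.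
rewrite /lapTr; apply: le_trans (_ : \sum_(j < n) \sum_(k < n) (4 * d)%:R <= _); last first.
  by rewrite !sumr_const !card_ord -!mulrnA mulnn.
have S_ge0 : 0 <= \sum_(j < n) \sum_(k < n) Gm j k * \sum_(a < d) (A a j - A a k) ^+ 2.
  apply: sumr_ge0 => j _; apply: sumr_ge0 => k _.
  apply: mulr_ge0; first by have /andP[] := Gm01 j k.
  by apply: sumr_ge0 => a _; exact: sqr_ge0.
apply: le_trans (_ : _ <= \sum_(j < n) \sum_(k < n) Gm j k * \sum_(a < d) (A a j - A a k) ^+ 2) _.
  by rewrite ler_piMl // invf_le1 ?ler1n.
apply: ler_sum => j _; apply: ler_sum => k _; have /andP[g0 g1] := Gm01 j k.
by rewrite -[X in _ <= X]mul1r ler_pM ?dist_le ?sumr_ge0 // => a _; rewrite sqr_ge0.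
Qed.

End FeasibleGraphs.

Section GraphObjective.
Variables (R : realType) (n m d : nat).

Lemma weighted_lapTr_le di (lam N : R) (Xi : 'M[R]_(di, n)) (P : 'M[R]_n)
    (A : 'M[R]_(d, n)) (Wi : 'M[R]_(di, d)) (Gm : 'M[R]_n) :
  0 < lam -> 0 <= N -> A *m A^T = 1%:M -> (forall j k, 0 <= Gm j k <= 1) ->
  lam * (N / Num.sqrt (fobj lam Xi P A Wi Gm) * lapTr A Gm)
  <= N * (1 + lam * (4 * d * n ^ 2)%:R).
Proof.
move=> lam_gt0 N0 AAT Gm01.
have lapTr0 : 0 <= lam * lapTr A Gm.
  by rewrite mulr_ge0 ?(ltW lam_gt0) ?lapTr_ge0 // => j k; have /andP[] := Gm01 j k.
rewrite /fobj; set y := mfro2 _; set z := lam * lapTr A Gm.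
have -> : lam * (N / Num.sqrt (y + z) * lapTr A Gm) = N * (z / Num.sqrt (y + z)).
  by rewrite /z; ring.
rewrite ler_wpM2l //; apply: le_trans (divr_sqrtD_le (mfro2_ge0 _) lapTr0) _.
by rewrite lerD2l ler_wpM2l ?(ltW lam_gt0) ?lapTr_le.
Qed.

Lemma Gobj_ge_prox (lam gam rh : R) Om M (A : 'M[R]_(d, n)) (delta : 'I_m -> R)
    (Y C G : tensor R n m n) :
  0 <= lam -> 0 <= gam -> (forall i, 0 <= delta i) -> Gfeas G ->
  rh / 2 * tnormF2 (tadd (tsub G Y) (tscale rh^-1 C))
  <= Gobj lam gam rh Om M A delta Y C G.
Proof.
move=> lam0 gam0 delta0 [G0 _]; rewrite /Gobj lerDr addr_ge0 ?mulr_ge0 ?tnormF2_ge0 //.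
by apply: sumr_ge0 => i _; rewrite mulr_ge0 ?lapTr_ge0 // => j k; rewrite mxE.
Qed.

Lemma Gobj_le (di : 'I_m -> nat) (X : forall i, 'M[R]_(di i, n)) (pres : 'I_m -> 'I_n -> bool)
    (lam gam rh : R) Om M (A : 'M[R]_(d, n)) (W : forall i, 'M[R]_(di i, d))
    (delta : 'I_m -> R) (Y C G : tensor R n m n) :
  0 < lam -> 0 <= gam -> A *m A^T = 1%:M -> Gfeas G ->
  (forall i, delta i = (#|[pred j | pres i j]|)%:R /
     Num.sqrt (fobj lam (X i) (Pmat (pres i)) A (W i) (lslice G i))) ->
  Gobj lam gam rh Om M A delta Y C G
  <= (m * n)%:R * (1 + lam * (4 * d * n ^ 2)%:R) + gam * ((n * m)%:R + tnormF2 M)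
     + rh / 2 * tnormF2 (tadd (tsub G Y) (tscale rh^-1 C)).
Proof.
move=> lam_gt0 gam0 AAT feasG deltaE; rewrite /Gobj lerD2r; apply: lerD.
  apply: le_trans (_ : \sum_(i < m) n%:R * (1 + lam * (4 * d * n ^ 2)%:R) <= _); last first.
    by rewrite sumr_const card_ord -mulrnAl -mulrnA mulnC.
  rewrite mulr_sumr; apply: ler_sum => i _; rewrite deltaE.
  apply: le_trans; first apply: weighted_lapTr_le => // j k.
    by have [G0 _] := feasG; rewrite mxE G0 Gfeas_le1.
  rewrite ler_wpM2r ?addr_ge0 ?mulr_ge0 ?(ltW lam_gt0) // ler_nat.
  by rewrite -[n in (_ <= n)%N]card_ord max_card.
have q_le : tnormF2 (tsub (POm Om G) (POm Om M)) <= 2 * ((n * m)%:R + tnormF2 M).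
  apply: le_trans (tnormF2_tsub_le _ _) _.
  have := tnormF2_POm_le Om G; have := tnormF2_POm_le Om M.
  have := Gfeas_tnormF2_le feasG; lra.
apply: le_trans (ler_wpM2l _ q_le) _; first by rewrite divr_ge0.
by rewrite mulrA divfK ?pnatr_eq0.
Qed.

End GraphObjective.

Section PenaltySchedule.
Variable R : realType.

Lemma rho_gt0 k : 0 < rho k :> R.
Proof. by rewrite /rho mulr_gt0 ?invr_gt0 ?ltr0n // exprn_gt0 // divr_gt0 ?ltr0n. Qed.

Lemma rhoS k : rho k.+1 = rho k * (11%:R / 10%:R) :> R.
Proof. by rewrite /rho exprS; ring. Qed.

Lemma rho_inv_cvg0 : (fun k => (rho k : R)^-1) @ \oo --> 0.
Proof.
have q_gt1 : (1 : R) < 11%:R / 10%:R by rewrite ltr_pdivlMr ?ltr0n // mul1r ltr_nat.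
apply: (@cvg0_le _ _ (fun k => ((11%:R / 10%:R)^-1) ^+ k * 10000%:R)).
  by move=> k; rewrite invr_ge0 ltW ?rho_gt0 //= /rho invfM invrK exprVn mulrC.
have /(cvgMr_tmp (b := 10000%:R)) : (fun k => ((11%:R / 10%:R)^-1) ^+ k) @ \oo --> (0 : R).
  apply: cvg_expr; rewrite ger0_norm ?invr_ge0 ?divr_ge0 ?ler0n //.
  by rewrite invf_lt1 // (lt_trans ltr01 q_gt1).
by rewrite mul0r; apply.
Qed.

End PenaltySchedule.

Section Iterates.
Variables (R : realType) (n m d r : nat) (di : 'I_m -> nat)
  (X : forall i, 'M[R]_(di i, n)) (pres : 'I_m -> 'I_n -> bool)
  (M : tensor R n m n) (Om : 'I_n -> 'I_m -> 'I_n -> bool)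
  (lam mu gam p : R) (w : 'I_(minn n m) -> R)
  (Phi : 'M[R]_(n, r)) (Phic : 'M[R]_(n, n - r))
  (A : nat -> 'M[R]_(d, n)) (W : nat -> forall i, 'M[R]_(di i, d))
  (delta : nat -> 'I_m -> R) (G Y C : nat -> tensor R n m n).
Hypothesis run : alg_run X pres M Om lam mu gam p w Phi Phic A W delta G Y C.

Let step k := let: conj _ (conj _ (conj _ (conj _ s))) := run in s k.

Lemma A_orthonormal k : A k.+1 *m (A k.+1)^T = 1%:M.
Proof. by have [[]] := step k. Qed.

Lemma deltaE k i : delta k.+1 i = (#|[pred j | pres i j]|)%:R /
  Num.sqrt (fobj lam (X i) (Pmat (pres i)) (A k.+1) (W k.+1 i) (lslice (G k) i)).
Proof. by have [_ []] := step k. Qed.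

Lemma G_feasible k : Gfeas (G k.+1).
Proof. by have [_ [_ [[]]]] := step k. Qed.

Lemma G_minimal k G' : Gfeas G' ->
  Gobj lam gam (rho k) Om M (A k.+1) (delta k.+1) (Y k) (C k) (G k.+1)
  <= Gobj lam gam (rho k) Om M (A k.+1) (delta k.+1) (Y k) (C k) G'.
Proof. by have [_ [_ [[_ G_min] _]]] := step k; exact: G_min. Qed.

Let Cs k := tscale (rho k)^-1 (C k).
Let B k := tadd (G k.+1) (Cs k).

Lemma Y_thresholded k : exists Zs : 'I_r -> 'M[R]_(n, m),
  (forall i, Sthresh (mu / rho k) w p (fslice (tmode3 (B k) Phi) i) (Zs i)) /\
  Y k.+1 = tmode3 (Zten Zs (tmode3 (B k) Phic)) (row_mx Phi Phic)^T.
Proof. by have [_ [_ [_ []]]] := step k. Qed.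

Lemma C_update k : C k.+1 = tadd (C k) (tscale (rho k) (tsub (G k.+1) (Y k.+1))).
Proof. by have [_ [_ [_ [_ ]]]] := step k. Qed.

Hypotheses (mu_gt0 : 0 < mu) (p_gt0 : 0 < p) (p_le1 : p <= 1)
  (w_ge0 : forall j, 0 <= w j)
  (PhiT_Phi : (row_mx Phi Phic)^T *m row_mx Phi Phic = 1%:M)
  (Phi_PhiT : row_mx Phi Phic *m (row_mx Phi Phic)^T = 1%:M).

Lemma Ystep_dist_le k : tnormF2 (tsub (B k) (Y k.+1))
  <= 2 * (mu / rho k) * (\sum_j w j) * (r%:R * (minn n m)%:R + tnormF2 (B k)).
Proof.
have [Zs [Zs_thresh ->]] := Y_thresholded k.
have tau_ge0 : 0 <= mu / rho k by rewrite divr_ge0 // ltW ?rho_gt0.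
have := tnormF2_Ystep_le PhiT_Phi Phi_PhiT tau_ge0 w_ge0 p_gt0 p_le1 Zs_thresh.
exact.
Qed.

Lemma B_tnormF2_le k : tnormF2 (B k) <= 2 * (n * m)%:R + 2 * tnormF2 (Cs k).
Proof.
apply: le_trans (tnormF2_tadd_le _ _) _.
by rewrite lerD2r ler_wpM2l // (Gfeas_tnormF2_le (G_feasible k)).
Qed.

Lemma Cs_succ_le k : tnormF2 (Cs k.+1) <= tnormF2 (tsub (B k) (Y k.+1)).
Proof.
apply: ler_tnormF2 => a b c; rewrite /Cs /B /tscale /tadd /tsub C_update rhoS.
have rho_neq0 : rho k != 0 :> R by rewrite gt_eqF ?rho_gt0.
set g := G k.+1 a b c; set y := Y k.+1 a b c; set c0 := C k a b c.
have -> : (rho k * (11%:R / 10%:R))^-1 * (c0 + rho k * (g - y)) =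
          10%:R / 11%:R * (g + (rho k)^-1 * c0 - y).
  by field; rewrite rho_neq0 /= ?pnatr_eq0.
rewrite exprMn ler_piMl ?sqr_ge0 // exprn_ile1 ?divr_ge0 //.
by rewrite ler_pdivrMr ?ltr0n // mul1r ler_nat.
Qed.

Lemma Ystep_dist_cvg0 : (fun k => tnormF2 (tsub (B k) (Y k.+1))) @ \oo --> 0.
Proof.
set Wt := \sum_j w j; have Wt_ge0 : 0 <= Wt by apply: sumr_ge0 => j _.
have tauW_ge0 k : 0 <= mu / rho k * Wt by rewrite mulr_ge0 // divr_ge0 // ltW ?rho_gt0.
apply: (@cvg0_recursive_bound _ _ (fun k => 4 * (mu / rho k) * Wt)
          (r%:R * (minn n m)%:R + (n * m)%:R)).
- by rewrite addr_ge0 ?mulr_ge0.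
- by move=> k; exact: tnormF2_ge0.
- by move=> k; rewrite -mulrA mulr_ge0.
- have -> : (fun k => 4 * (mu / rho k) * Wt) = (fun k => 4 * mu * Wt * (rho k)^-1).
    by apply/funext => k; ring.
  by have := cvgMl_tmp (a := 4 * mu * Wt) (@rho_inv_cvg0 R); rewrite mulr0; apply.
move=> k; apply: le_trans (Ystep_dist_le k.+1) _.
have := B_tnormF2_le k.+1; have := Cs_succ_le k.
set rl := r%:R * _; set E := tnormF2 (tsub (B k) (Y k.+1)).
set Bn := tnormF2 (B k.+1); set Cn := tnormF2 (Cs k.+1).
move=> Cn_le Bn_le; have rl_ge0 : 0 <= rl by rewrite mulr_ge0.
have -> : 2 * (mu / rho k.+1) * Wt * (rl + Bn) = mu / rho k.+1 * Wt * (2 * (rl + Bn)) by ring.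
have -> : 4 * (mu / rho k.+1) * Wt * (rl + (n * m)%:R + E)
  = mu / rho k.+1 * Wt * (4 * (rl + (n * m)%:R + E)) by ring.
by apply: ler_wpM2l => //; lra.
Qed.

Lemma Cs_cvg0 : (fun k => tnormF2 (Cs k)) @ \oo --> 0.
Proof.
rewrite -(cvg_shiftS (fun k => tnormF2 (Cs k))).
by apply: cvg0_le Ystep_dist_cvg0 => k; rewrite tnormF2_ge0 Cs_succ_le.
Qed.

Lemma residual_cvg0 : (fun k => tnormF2 (tsub (G k) (Y k))) @ \oo --> 0.
Proof.
rewrite -(cvg_shiftS (fun k => tnormF2 (tsub (G k) (Y k)))).
apply: cvg0_le_lin Ystep_dist_cvg0 Cs_cvg0 => k; rewrite tnormF2_ge0 /=.
rewrite (@eq_tnormF2 _ _ _ _ _ (tsub (tsub (B k) (Y k.+1)) (Cs k))).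
  exact: tnormF2_tsub_le.
by move=> a b c; rewrite /tsub /B /tadd; ring.
Qed.

Lemma prox_dist_cvg0 :
  (fun k => tnormF2 (tadd (tsub (G k) (Y k)) (Cs k))) @ \oo --> 0.
Proof.
apply: (cvg0_le_lin (x := 2) (y := 2)) residual_cvg0 Cs_cvg0 => k.
by rewrite tnormF2_ge0 tnormF2_tadd_le.
Qed.

Hypotheses (lam_gt0 : 0 < lam) (gam_gt0 : 0 < gam).

Let obj_bound :=
  (m * n)%:R * (1 + lam * (4 * d * n ^ 2)%:R) + gam * ((n * m)%:R + tnormF2 M).

Lemma Gstep_prox_dist_le k :
  tnormF2 (tadd (tsub (G k.+2) (Y k.+1)) (Cs k.+1))
  <= 2 * obj_bound * (rho k.+1)^-1 + tnormF2 (tadd (tsub (G k.+1) (Y k.+1)) (Cs k.+1)).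
Proof.
have half_rho_gt0 : 0 < rho k.+1 / 2 :> R by rewrite divr_gt0 ?rho_gt0.
rewrite -(ler_pM2l half_rho_gt0) mulrDr (_ : _ * (2 * obj_bound * _) = obj_bound); last first.
  by field; rewrite gt_eqF ?rho_gt0.
(* G^{k+2} minimises the step-(3) objective, for which G^{k+1} is feasible *)
apply: le_trans (le_trans _ (G_minimal k.+1 (G_feasible k))) _.
  apply: Gobj_ge_prox; [exact: ltW | exact: ltW | move=> i | exact: G_feasible].
  by rewrite deltaE divr_ge0 ?sqrtr_ge0.
apply: Gobj_le; [by [] | exact: ltW | exact: A_orthonormal | exact: G_feasible |].
exact: deltaE.
Qed.

Lemma Gdiff_cvg0 : (fun k => tnormF2 (tsub (G k.+1) (G k))) @ \oo --> 0.
Proof.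
rewrite -(cvg_shiftS (fun k => tnormF2 (tsub (G k.+1) (G k)))).
have rho_inv_succ : (fun k => (rho k.+1 : R)^-1) @ \oo --> 0.
  by rewrite (cvg_shiftS (fun k => (rho k : R)^-1)); exact: rho_inv_cvg0.
have prox_succ :
    (fun k => tnormF2 (tadd (tsub (G k.+1) (Y k.+1)) (Cs k.+1))) @ \oo --> 0.
  rewrite (cvg_shiftS (fun k => tnormF2 (tadd (tsub (G k) (Y k)) (Cs k)))).
  exact: prox_dist_cvg0.
apply: (cvg0_le_lin (x := 4 * obj_bound) (y := 4)) rho_inv_succ prox_succ => k.
rewrite tnormF2_ge0 /=; set D1 := tadd (tsub (G k.+1) (Y k.+1)) (Cs k.+1).
rewrite (@eq_tnormF2 _ _ _ _ _ (tsub (tadd (tsub (G k.+2) (Y k.+1)) (Cs k.+1)) D1)).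
  by apply: le_trans (tnormF2_tsub_le _ _) _; have := Gstep_prox_dist_le k; lra.
by move=> a b c; rewrite /D1 /tsub /tadd; ring.
Qed.

Lemma Ydiff_cvg0 : (fun k => tnormF2 (tsub (Y k.+1) (Y k))) @ \oo --> 0.
Proof.
have residual_succ : (fun k => tnormF2 (tsub (G k.+1) (Y k.+1))) @ \oo --> 0.
  by rewrite (cvg_shiftS (fun k => tnormF2 (tsub (G k) (Y k)))); exact: residual_cvg0.
have two_steps :
    (fun k => tnormF2 (tadd (tsub (G k.+1) (G k)) (tsub (G k) (Y k)))) @ \oo --> 0.
  apply: (cvg0_le_lin (x := 2) (y := 2)) Gdiff_cvg0 residual_cvg0 => k.
  by rewrite tnormF2_ge0 tnormF2_tadd_le.
apply: (cvg0_le_lin (x := 2) (y := 2)) two_steps residual_succ => k.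
rewrite tnormF2_ge0 /=.
rewrite (@eq_tnormF2 _ _ _ _ _ (tsub (tadd (tsub (G k.+1) (G k)) (tsub (G k) (Y k)))
  (tsub (G k.+1) (Y k.+1)))) ?tnormF2_tsub_le // => a b c.
by rewrite /tsub /tadd; ring.
Qed.

End Iterates.

Theorem theorem2 (R : realType) (n m d r : nat) (di : 'I_m -> nat)
  (X : forall i, 'M[R]_(di i, n)) (pres : 'I_m -> 'I_n -> bool)
  (M : tensor R n m n) (Om : 'I_n -> 'I_m -> 'I_n -> bool)
  (lam mu gam p : R) (w : 'I_(minn n m) -> R)
  (Phi : 'M[R]_(n, r)) (Phic : 'M[R]_(n, n - r))
  (A : nat -> 'M[R]_(d, n)) (W : nat -> forall i, 'M[R]_(di i, d))
  (delta : nat -> 'I_m -> R) (G Y C : nat -> tensor R n m n) :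
  (forall i j, ~~ pres i j -> col j (X i) = 0) ->
  (forall i, X i *m Pmat (pres i) *m (X i)^T \in unitmx) ->
  0 < lam -> 0 < mu -> 0 < gam -> 0 < p -> p <= 1 ->
  (forall j, 0 <= w j) ->
  (forall j1 j2 : 'I_(minn n m), (j1 <= j2)%N -> w j2 <= w j1) ->
  (r <= n)%N ->
  Phi^T *m Phi = 1%:M ->
  (row_mx Phi Phic)^T *m row_mx Phi Phic = 1%:M ->
  row_mx Phi Phic *m (row_mx Phi Phic)^T = 1%:M ->
  alg_run X pres M Om lam mu gam p w Phi Phic A W delta G Y C ->
  [/\ (fun k => tnormF (tsub (G k) (Y k))) @ \oo --> 0,
      (fun k => tnormF (tsub (G k.+1) (G k))) @ \oo --> 0 &
      (fun k => tnormF (tsub (Y k.+1) (Y k))) @ \oo --> 0].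
Proof.
move=> _ _ lam_gt0 mu_gt0 gam_gt0 p_gt0 p_le1 w_ge0 _ _ _ PhiT_Phi Phi_PhiT run.
split; apply: cvg0_sqrt.
- exact: residual_cvg0 run mu_gt0 p_gt0 p_le1 w_ge0 PhiT_Phi Phi_PhiT.
- exact: Gdiff_cvg0 run mu_gt0 p_gt0 p_le1 w_ge0 PhiT_Phi Phi_PhiT lam_gt0 gam_gt0.
- exact: Ydiff_cvg0 run mu_gt0 p_gt0 p_le1 w_ge0 PhiT_Phi Phi_PhiT lam_gt0 gam_gt0.
Qed.
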